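(* Let $\mathcal{X}\subset\mathbb{R}^p$, $\mathcal{Y}\subset\mathbb{R}^q$ be closed convex sets with $\mathcal{Z}=\mathcal{X}\times\mathcal{Y}$ compact and $\max_{\mathbf{z},\mathbf{z}'\in\mathcal{Z}}\|\mathbf{z}-\mathbf{z}'\|\le D$, let $f:\mathcal{X}\times\mathcal{Y}\to\mathbb{R}$ be continuous, and let $F(\mathbf{x},\mathbf{y})=\partial_xf(\mathbf{x},\mathbf{y})\times\partial_y[-f(\mathbf{x},\mathbf{y})]$ be $\rho$-weakly monotone ($\rho>0$), single-valued and $L$-Lipschitz continuous on $\mathcal{Z}$, with $\mathrm{MVI}(F,\mathcal{Z})$ having a solution. Run the inexact proximal point method with $\gamma=\frac1{2\rho}$, $\theta_k=(k+1)^\alpha$ ($\alpha\ge1$), and $K=\frac{16\rho^2D^2(\alpha+1)}{\epsilon^2}$ stages: from $\mathbf{z}_0\in\mathcal{Z}$, for $k=0,\dots,K-1$, with $F_k(\mathbf{z})=F(\mathbf{z})+\gamma^{-1}(\mathbf{z}-\mathbf{z}_k)$, let $\mathbf{z}_{k+1}=\mathbf{z}^{(T_k)}$ where $\mathbf{z}^{(0)}=\mathbf{z}_k$ and $\mathbf{z}^{(t+1)}=\mathrm{Proj}_{\mathcal{Z}}(\mathbf{z}^{(t)}-\eta_kF_k(\mathbf{z}^{(t)}))$ with $\eta_k=\frac{\rho}{2(L+2\rho)^2}$ and $T_k=1+\frac{4(L+2\rho)^2}{\rho^2}\log\big(\frac{8(L+2\rho)^2(k+1)}{\rho^2}\big)$.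 Output $\mathbf{z}_\tau$ with $\mathrm{Prob}(\tau=k)=\theta_k/\sum_{l=0}^{K-1}\theta_l$ and let $\bar{\mathbf{z}}_\tau=(\bar{\mathbf{u}}_\tau,\bar{\mathbf{v}}_\tau)$ be the solution of $\mathrm{SVI}(F^\gamma_{\mathbf{z}_\tau},\mathcal{Z})$ with $F^\gamma_{\mathbf{w}}(\mathbf{z})=F(\mathbf{z})+\gamma^{-1}(\mathbf{z}-\mathbf{w})$. Then $$\mathbb{E}\|\mathbf{z}_\tau-\bar{\mathbf{z}}_\tau\|^2\le\gamma^2\epsilon^2,\qquad\mathbb{E}\big[\mathrm{dist}^2\big(0,\partial(f(\bar{\mathbf{u}}_\tau,\bar{\mathbf{v}}_\tau)+1_{\mathcal{Z}}(\bar{\mathbf{u}}_\tau,\bar{\mathbf{v}}_\tau))\big)\big]\le\epsilon^2,$$ and the total iteration complexity $\sum_{k<K}T_k$ is $O\big(\log(\frac1\epsilon)\frac{L^2}{\epsilon^2}\big)$.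
   Context: $\partial$ is the Fréchet subdifferential ($\partial h(\mathbf{x})=\{\boldsymbol{\zeta}:h(\mathbf{x}')\ge h(\mathbf{x})+\boldsymbol{\zeta}^\top(\mathbf{x}'-\mathbf{x})+o(\|\mathbf{x}'-\mathbf{x}\|)\}$), $\partial_x,\partial_y$ partial ones; $1_{\mathcal{S}}$ is the indicator of $\mathcal{S}$; $\partial(f+1_{\mathcal{Z}})(\mathbf{x},\mathbf{y}):=\partial_x[f(\mathbf{x},\mathbf{y})+1_{\mathcal{X}}(\mathbf{x})]\times\partial_y[-f(\mathbf{x},\mathbf{y})+1_{\mathcal{Y}}(\mathbf{y})]$; $\mathrm{dist}$ is Euclidean distance; $\mathrm{Proj}_{\mathcal{Z}}$ Euclidean projection. $F$ is $\rho$-weakly monotone if $\langle F(\mathbf{z})-F(\mathbf{z}'),\mathbf{z}-\mathbf{z}'\rangle\ge-\rho\|\mathbf{z}-\mathbf{z}'\|^2$. $\mathrm{MVI}(F,\mathcal{Z})$: find $\mathbf{z}_*\in\mathcal{Z}$ with $\langle F(\mathbf{z}),\mathbf{z}-\mathbf{z}_*\rangle\ge0$ for all $\mathbf{z}\in\mathcal{Z}$. $\mathrm{SVI}(G,\mathcal{Z})$: find $\mathbf{z}^*\in\mathcal{Z}$ with $\langle G(\mathbf{z}^* ),\mathbf{z}-\mathbf{z}^*\rangle\ge0$ for all $\mathbf{z}\in\mathcal{Z}$ (unique for $G=F^\gamma_{\mathbf{w}}$). *)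

From HB Require Import structures.
From mathcomp Require Import all_boot all_order all_algebra.
From mathcomp Require Import all_classical all_reals all_analysis.
Set Implicit Arguments. Unset Strict Implicit. Unset Printing Implicit Defensive.
Import Order.TTheory GRing.Theory Num.Theory.
Import numFieldNormedType.Exports.
Local Open Scope classical_set_scope.
Local Open Scope ring_scope.

Section Defs.
Variable R : realType.

Definition dotv n (u v : 'rV[R]_n) : R := \sum_(i < n) u 0 i * v 0 i.
Definition enorm n (u : 'rV[R]_n) : R := Num.sqrt (dotv u u).

(* Fréchet subdifferential of h + 1_S at x (empty when x \notin S):
   zeta such that h x' >= h x + <zeta, x' - x> + o(|x' - x|) for x' in S. *)
Definition fsub n (S : set 'rV[R]_n) (h : 'rV[R]_n -> R) (x : 'rV[R]_n) :
    set 'rV[R]_n :=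
  [set zeta | S x /\ forall e : R, 0 < e -> exists2 d : R, 0 < d &
      forall x', S x' -> enorm (x' - x) < d ->
        h x + dotv zeta (x' - x) - e * enorm (x' - x) <= h x'].

(* Euclidean projection onto Z (a nearest point; unique for closed convex Z) *)
Definition proj n (Z : set 'rV[R]_n) (z : 'rV[R]_n) : 'rV[R]_n :=
  xget z [set w | Z w /\ forall w', Z w' -> enorm (z - w) <= enorm (z - w')].

(* squared distance from 0 to a set, +oo for the empty set *)
Definition dist2_0 n (S : set 'rV[R]_n) : \bar R :=
  ereal_inf [set ((enorm zeta) ^+ 2)%:E | zeta in S].

Definition ceiln (x : R) : nat := `|Num.ceil x|%N.

Definition inner_pg n (Z : set 'rV[R]_n) (F : 'rV[R]_n -> 'rV[R]_n)
  (gamma eta : R) (T : nat) (w : 'rV[R]_n) : 'rV[R]_n :=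
  iter T (fun z => proj Z (z - eta *: (F z + gamma^-1 *: (z - w)))) w.

Fixpoint ipp n (Z : set 'rV[R]_n) (F : 'rV[R]_n -> 'rV[R]_n)
  (gamma : R) (eta : nat -> R) (T : nat -> nat) (z0 : 'rV[R]_n) (k : nat)
  : 'rV[R]_n :=
  match k with
  | 0 => z0
  | k'.+1 => inner_pg Z F gamma (eta k') (T k') (ipp Z F gamma eta T z0 k')
  end.

Definition svi n (Z : set 'rV[R]_n) (G : 'rV[R]_n -> 'rV[R]_n) (z : 'rV[R]_n) :=
  Z z /\ forall z', Z z' -> 0 <= dotv (G z) (z' - z).

End Defs.

From Pilot Require Import Defs.
From HB Require Import structures.
From mathcomp Require Import all_boot all_order all_algebra.
From mathcomp Require Import all_classical all_reals all_analysis.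
From mathcomp Require Import ring lra.
Import Order.TTheory GRing.Theory Num.Theory.
Import numFieldNormedType.Exports.
Local Open Scope classical_set_scope.
Local Open Scope ring_scope.
Set Implicit Arguments. Unset Strict Implicit. Unset Printing Implicit Defensive.

(* With gamma = 1 / (2 rho), the proximal operator F + gamma^-1 (. - w) is rho-strongly
   monotone and (L + 2 rho)-Lipschitz on the compact convex set Z, so the projected gradient
   map with step rho / (2 (L + 2 rho)^2) contracts squared distances by
   1 - 3 rho^2 / (4 (L + 2 rho)^2); its unique fixed point is the SVI solution zbar_k, and
   T_k steps bring z_{k+1} within squared distance |z_k - zbar_k|^2 / (32 (k + 1)) of it.
   The SVI tested at a Minty solution z* gives <zbar_k - z_k, z* - zbar_k> >= 0, hence
   |z_k - zbar_k|^2 + |zbar_k - z*|^2 <= |z_k - z*|^2; together with the inexactness this yields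
   23 |z_k - zbar_k|^2 <= 32 (|z_k - z*|^2 - |z_{k+1} - z*|^2) + 4 D^2 / (k + 1).
   Summing with the nondecreasing weights theta_k (Abel summation) and using
   sum_{k<K} theta_k >= K^(alpha+1) / (alpha + 1) gives the first bound.  The SVI also says
   that F(zbar_k) - F^gamma(zbar_k) = gamma^-1 (z_k - zbar_k) is a normal vector of Z at
   zbar_k, i.e. a point of the restricted subdifferential, so the second bound follows from
   the first.  Finally T_k = O(log k) and K = O(1 / eps^2) give the complexity bound. *)

Section Euclid.
Variables (R : realType) (n : nat).
Implicit Types (a : R) (u v w : 'rV[R]_n).

Lemma dotvC u v : dotv u v = dotv v u.
Proof. by apply: eq_bigr => i _; rewrite mulrC. Qed.

Lemma dotvDl u v w : dotv (u + v) w = dotv u w + dotv v w.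
Proof. by rewrite /dotv -big_split; apply: eq_bigr => i _; rewrite !mxE mulrDl. Qed.

Lemma dotvDr u v w : dotv u (v + w) = dotv u v + dotv u w.
Proof. by rewrite dotvC dotvDl !(dotvC u). Qed.

Lemma dotvZl a u v : dotv (a *: u) v = a * dotv u v.
Proof. by rewrite /dotv mulr_sumr; apply: eq_bigr => i _; rewrite !mxE mulrA. Qed.

Lemma dotvZr a u v : dotv u (a *: v) = a * dotv u v.
Proof. by rewrite dotvC dotvZl dotvC. Qed.

Lemma dotvNl u v : dotv (- u) v = - dotv u v.
Proof. by rewrite -scaleN1r dotvZl mulN1r. Qed.

Lemma dotvNr u v : dotv u (- v) = - dotv u v.
Proof. by rewrite dotvC dotvNl dotvC. Qed.

Lemma dotvBl u v w : dotv (u - v) w = dotv u w - dotv v w.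
Proof. by rewrite dotvDl dotvNl. Qed.

Lemma dotv0r u : dotv u 0 = 0.
Proof. by rewrite /dotv big1 // => i _; rewrite mxE mulr0. Qed.

Lemma dotvv_ge0 u : 0 <= dotv u u.
Proof. by apply: sumr_ge0 => i _; rewrite -expr2 sqr_ge0. Qed.

Lemma dotvv_eq0 u : dotv u u = 0 -> u = 0.
Proof.
move=> /eqP; rewrite psumr_eq0 => [/allP u0|i _]; last by rewrite -expr2 sqr_ge0.
apply/rowP => i; rewrite mxE; apply/eqP.
by rewrite -sqrf_eq0 expr2; apply: u0; rewrite mem_index_enum.
Qed.

Lemma dotvvD u v : dotv (u + v) (u + v) = dotv u u + 2 * dotv u v + dotv v v.
Proof. by rewrite !dotvDl !dotvDr (dotvC v u); ring. Qed.

Lemma dotvvB u v : dotv (u - v) (u - v) = dotv u u - 2 * dotv u v + dotv v v.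
Proof. by rewrite dotvvD dotvNr dotvNl dotvNr opprK; ring. Qed.

Lemma dotv_young u v (s : R) : 0 < s -> 2 * dotv u v <= s * dotv u u + s^-1 * dotv v v.
Proof.
move=> s0; have := dotvv_ge0 (s *: u - v).
rewrite dotvvB !dotvZl !dotvZr => h.
have : 0 <= s^-1 * (s * (s * dotv u u) - 2 * (s * dotv u v) + dotv v v).
  by rewrite mulr_ge0 // invr_ge0 ltW.
have -> : s^-1 * (s * (s * dotv u u) - 2 * (s * dotv u v) + dotv v v) =
    s * dotv u u - 2 * dotv u v + s^-1 * dotv v v by field; rewrite gt_eqF.
lra.
Qed.

Lemma enorm_ge0 u : 0 <= enorm u.
Proof. exact: sqrtr_ge0. Qed.

Lemma sqr_enorm u : enorm u ^+ 2 = dotv u u.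
Proof. by rewrite /enorm sqr_sqrtr // dotvv_ge0. Qed.

Lemma ler_enorm u v : (enorm u <= enorm v) = (dotv u u <= dotv v v).
Proof. exact/ler_sqrt/dotvv_ge0. Qed.

Lemma dotv_le_enorm u v : dotv u v <= enorm u * enorm v.
Proof.
suff cs : dotv u v ^+ 2 <= dotv u u * dotv v v.
  apply: le_trans (ler_norm _) _.
  rewrite -(ler_pXn2r (n := 2)) ?nnegrE ?normr_ge0 ?mulr_ge0 ?enorm_ge0 //.
  by rewrite exprMn !sqr_enorm real_normK // num_real.
have [v0|vn0] := eqVneq (dotv v v) 0.
  by rewrite (dotvv_eq0 v0) !dotv0r expr0n mulr0.
have vp : 0 < dotv v v by rewrite lt_neqAle eq_sym vn0 dotvv_ge0.
have := dotvv_ge0 (dotv v v *: u - dotv u v *: v).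
rewrite dotvvB !dotvZl !dotvZr => h.
have : 0 <= dotv v v * (dotv u u * dotv v v - dotv u v ^+ 2) by nra.
by rewrite pmulr_rge0 // subr_ge0.
Qed.

Lemma ler_enormD u v : enorm (u + v) <= enorm u + enorm v.
Proof.
rewrite -(ler_pXn2r (n := 2)) ?nnegrE ?addr_ge0 ?enorm_ge0 //.
rewrite sqr_enorm dotvvD sqrrD !sqr_enorm.
have := dotv_le_enorm u v; lra.
Qed.

Lemma enormZ a u : enorm (a *: u) = `|a| * enorm u.
Proof.
by rewrite /enorm dotvZl dotvZr mulrA -expr2 sqrtrM ?sqr_ge0 // sqrtr_sqr.
Qed.

Lemma enorm_distC u v : enorm (u - v) = enorm (v - u).
Proof. by rewrite -opprB -scaleN1r enormZ normrN normr1 mul1r. Qed.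

Lemma ler_enorm_dist u v : `|enorm u - enorm v| <= enorm (u - v).
Proof.
have := ler_enormD (u - v) v; have := ler_enormD (v - u) u.
rewrite !subrK enorm_distC => h1 h2.
by rewrite ler_norml; apply/andP; split; lra.
Qed.

Lemma inexact_step_descent u u1 w s (D2 kk : R) :
  0 <= dotv (w - u) (s - w) ->
  dotv (u1 - w) (u1 - w) <= (32 * kk)^-1 * dotv (u - w) (u - w) ->
  dotv (w - s) (w - s) <= D2 -> 1 <= kk ->
  23 * dotv (u - w) (u - w) <=
    32 * (dotv (u - s) (u - s) - dotv (u1 - s) (u1 - s)) + 4 * (D2 / kk).
Proof.
move=> obtuse u1_close B_le kk_ge1.
(* Young's inequality with weight 8 kk bounds |u1 - s|^2; as kk |u1 - w|^2 <= |u - w|^2 / 32,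
   this costs at most 9 of the 32 copies of |u - w|^2. *)
have kk_gt0 : 0 < kk by lra.
have split_at (x y z : 'rV[R]_n) : dotv (x - z) (x - z) =
    dotv (x - y) (x - y) + 2 * dotv (x - y) (y - z) + dotv (y - z) (y - z).
  by rewrite -dotvvD addrA subrK.
set a := dotv (u - w) (u - w); set Nd := dotv (u1 - w) (u1 - w).
set B := dotv (w - s) (w - s).
have us : a + B <= dotv (u - s) (u - s).
  rewrite (split_at u w s) -/a -/B.
  have -> : dotv (u - w) (w - s) = dotv (w - u) (s - w).
    by rewrite -[u - w]opprB dotvNl -[w - s]opprB dotvNr opprK.
  lra.
have u1s : dotv (u1 - s) (u1 - s) <= Nd + 8 * (kk * Nd) + B + (8 * kk)^-1 * B.
  rewrite (split_at u1 w s) -/Nd -/B.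
  have := dotv_young (u1 - w) (w - s) (mulr_gt0 (ltr0n _ 8) kk_gt0).
  by rewrite -/Nd -/B; lra.
have kNd : kk * Nd <= a / 32.
  have := ler_wpM2l (ltW kk_gt0) u1_close.
  by rewrite (_ : kk * (_ * a) = a / 32) //; field; rewrite gt_eqF.
have Nd_le : Nd <= kk * Nd by rewrite ler_peMl ?dotvv_ge0.
have zB : (8 * kk)^-1 * B <= D2 / kk / 8.
  have inv_ge0 : 0 <= (8 * kk)^-1 by rewrite invr_ge0; apply: mulr_ge0; lra.
  have := ler_wpM2l inv_ge0 B_le.
  by rewrite (_ : _ * D2 = D2 / kk / 8) //; field; rewrite gt_eqF.
move: (kk * Nd) ((8 * kk)^-1 * B) (D2 / kk) kNd Nd_le zB u1s => x z y; lra.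
Qed.

(* [`|u|] is the sup norm of the normed-module structure on matrices. *)
Lemma enorm_le_mx_norm u : enorm u <= n%:R * `|u|.
Proof.
have coord i : `|u 0 i| <= `|u|.
  rewrite [X in _ <= X]mx_normrE.
  exact: (le_bigmax (0 : R) (fun ij : 'I_1 * 'I_n => `|u ij.1 ij.2|) (0, i)).
have -> : n%:R * `|u| = Num.sqrt ((n%:R * `|u|) ^+ 2).
  by rewrite sqrtr_sqr ger0_norm // mulr_ge0 ?ler0n ?normr_ge0.
rewrite /enorm ler_sqrt ?sqr_ge0 // /dotv.
apply: (@le_trans _ _ (\sum_(i < n) `|u| ^+ 2)).
  apply: ler_sum => i _; rewrite -expr2 -real_normK ?num_real //.
  by rewrite lerXn2r ?nnegrE ?normr_ge0.
rewrite sumr_const card_ord -[`|u| ^+ 2 *+ n]mulr_natl exprMn.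
apply: ler_wpM2r; first exact: sqr_ge0.
rewrite -natrX ler_nat; case: (n) => // m.
by rewrite expnS leq_pmulr // expn_gt0.
Qed.

Lemma lipschitz_within_continuous (A : set 'rV[R]_n) (g : 'rV[R]_n -> R) (C : R) :
  (forall x y, A x -> A y -> `|g x - g y| <= C * enorm (x - y)) ->
  {within A, continuous g}.
Proof.
move=> hg; apply/subspace_continuousP => x Ax.
apply/cvgrPdist_lt => e e0.
have C1 : 0 < `|C| + 1 by rewrite ltr_pwDr ?normr_ge0.
have n1 : 0 < n%:R + 1 :> R by rewrite ltr_pwDr ?ler0n.
have d0 : 0 < e / ((`|C| + 1) * (n%:R + 1)) by rewrite divr_gt0 ?mulr_gt0.
have h := @cvgr_dist_lt _ _ _ (nbhs x) _ id x (@cvg_id _ _) _ d0.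
rewrite near_withinE; near=> y => Ay.
have hy : `|x - y| < e / ((`|C| + 1) * (n%:R + 1)) by near: y; exact: h.
apply: le_lt_trans (hg x y Ax Ay) _; apply: le_lt_trans (ler_norm _) _.
rewrite normrM (ger0_norm (enorm_ge0 _)).
apply: (@le_lt_trans _ _ ((`|C| + 1) * ((n%:R + 1) * `|x - y|))).
  apply: ler_pM; rewrite ?normr_ge0 ?enorm_ge0 ?lerDl //.
  apply: le_trans (enorm_le_mx_norm _) _.
  by rewrite ler_wpM2r ?normr_ge0 ?lerDl.
by rewrite mulrA -ltr_pdivlMl ?mulr_gt0 // mulrC.
Unshelve. all: by end_near.
Qed.

Lemma convex_set_comb (Z : set 'rV[R]_n) x y (t : R) :
  convex_set Z -> Z x -> Z y -> 0 <= t -> t <= 1 -> Z (t *: x + (1 - t) *: y).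
Proof.
move=> cZ Zx Zy t0 t1.
by have := cZ x y (Itv01 t0 t1) (mem_set Zx) (mem_set Zy); rewrite in_setE.
Qed.

End Euclid.

Section Projection.
Variables (R : realType) (n : nat) (Z : set 'rV[R]_n).
Hypotheses (Z0 : Z !=set0) (Zcompact : compact Z) (Zconvex : convex_set Z).
Implicit Types x y w : 'rV[R]_n.

Lemma proj_spec x :
  Z (Defs.proj Z x) /\ forall w, Z w -> enorm (x - Defs.proj Z x) <= enorm (x - w).
Proof.
apply: (@xgetPex _ x [set w | Z w /\ forall w', Z w' -> enorm (x - w) <= enorm (x - w')]).
have dist_cont : {within Z, continuous (fun w => enorm (x - w))}.
  apply: (@lipschitz_within_continuous _ _ _ _ 1) => a b _ _ /=.
  have e : x - a - (x - b) = b - a by apply/rowP => i; rewrite !mxE; ring.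
  by apply: le_trans (ler_enorm_dist _ _) _; rewrite e mul1r enorm_distC.
have [c Zc cmin] := EVT_min_rV Z0 Zcompact dist_cont.
by exists c; split => [|w Zw]; [rewrite -in_setE | apply: cmin; rewrite in_setE].
Qed.

Lemma proj_in x : Z (Defs.proj Z x).
Proof. by case: (proj_spec x). Qed.

Lemma proj_obtuse x w : Z w -> dotv (x - Defs.proj Z x) (w - Defs.proj Z x) <= 0.
Proof.
move=> Zw; set p := Defs.proj Z x; set r := x - p; set d := w - p.
have [Zp pmin] := proj_spec x; rewrite -/p in Zp pmin.
have small_t t : 0 < t -> t <= 1 -> 2 * dotv r d <= t * dotv d d.
  move=> t0 t1; have := pmin _ (convex_set_comb Zconvex Zw Zp (ltW t0) t1).
  have -> : x - (t *: w + (1 - t) *: p) = r - t *: d.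
    by apply/rowP => i; rewrite !mxE; ring.
  rewrite ler_enorm [dotv (r - _) _]dotvvB !dotvZl !dotvZr => h.
  by rewrite -(ler_pM2l t0); lra.
rewrite leNgt; apply/negP => rd_gt0.
have dd := dotvv_ge0 d.
have den : 0 < dotv d d + dotv r d by lra.
pose t := dotv r d / (dotv d d + dotv r d).
have t0 : 0 < t by rewrite divr_gt0.
have t1 : t <= 1 by rewrite ler_pdivrMr // mul1r; lra.
have : t * dotv d d <= dotv r d by rewrite mulrAC ler_pdivrMr // ler_pM2l //; lra.
have := small_t _ t0 t1; lra.
Qed.

Lemma proj_eq x w :
  Z w -> (forall w', Z w' -> dotv (x - w) (w' - w) <= 0) -> Defs.proj Z x = w.
Proof.
move=> Zw w_obtuse; set p := Defs.proj Z x.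
have h1 := proj_obtuse x Zw; have h2 := w_obtuse _ (proj_in x); rewrite -/p in h1 h2.
have e : dotv (x - p) (w - p) + dotv (x - w) (p - w) = dotv (w - p) (w - p).
  rewrite -[p - w]opprB dotvNr -dotvBl; congr dotv.
  by apply/rowP => i; rewrite !mxE; ring.
have /dotvv_eq0/eqP : dotv (w - p) (w - p) = 0.
  by apply/eqP; rewrite eq_le dotvv_ge0 andbT; lra.
by rewrite subr_eq0 => /eqP.
Qed.

Lemma proj_nonexpansive x y :
  dotv (Defs.proj Z x - Defs.proj Z y) (Defs.proj Z x - Defs.proj Z y) <= dotv (x - y) (x - y).
Proof.
set px := Defs.proj Z x; set py := Defs.proj Z y.
have h1 := proj_obtuse x (proj_in y); have h2 := proj_obtuse y (proj_in x).
rewrite -/px -/py in h1 h2.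
have e : dotv (x - px) (py - px) + dotv (y - py) (px - py) =
    dotv (px - py) (px - py) - dotv (x - y) (px - py).
  rewrite -[py - px]opprB dotvNr addrC -dotvBl -dotvBl; congr dotv.
  by apply/rowP => i; rewrite !mxE; ring.
have := dotv_young (x - y) (px - py) ltr01; rewrite invr1 !mul1r; lra.
Qed.

End Projection.

Section ProjectedGradient.
Variable R : realType.

Definition pg_step n (Z : set 'rV[R]_n) (G : 'rV[R]_n -> 'rV[R]_n) (eta : R)
  (z : 'rV[R]_n) : 'rV[R]_n :=
  Defs.proj Z (z - eta *: G z).

Definition pg_factor (mu Lg : R) : R := 1 - 3 * mu ^+ 2 / (4 * Lg ^+ 2).

Variables (n : nat) (Z : set 'rV[R]_n) (G : 'rV[R]_n -> 'rV[R]_n) (mu Lg : R).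
Hypotheses (Z0 : Z !=set0) (Zcompact : compact Z) (Zconvex : convex_set Z).
Hypotheses (mu_gt0 : 0 < mu) (mu_le_Lg : mu <= Lg).
Hypothesis G_strong : forall z z', Z z -> Z z' ->
  mu * dotv (z - z') (z - z') <= dotv (G z - G z') (z - z').
Hypothesis G_lip : forall z z', Z z -> Z z' ->
  dotv (G z - G z') (G z - G z') <= Lg ^+ 2 * dotv (z - z') (z - z').

Local Notation Phi := (pg_step Z G (mu / (2 * Lg ^+ 2))).

Let Lg_gt0 : 0 < Lg. Proof. exact: lt_le_trans mu_le_Lg. Qed.

Lemma pg_factor_ge0 : 0 <= pg_factor mu Lg.
Proof.
rewrite /pg_factor subr_ge0 ler_pdivrMr ?mulr_gt0 ?exprn_gt0 // mul1r.
have : mu ^+ 2 <= Lg ^+ 2 by rewrite lerXn2r // nnegrE ltW.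
have := sqr_ge0 mu; lra.
Qed.

Lemma pg_factor_lt1 : pg_factor mu Lg < 1.
Proof. by rewrite /pg_factor ltrBlDr ltrDl divr_gt0 ?mulr_gt0 ?exprn_gt0. Qed.

Lemma pg_step_contraction z z' : Z z -> Z z' ->
  dotv (Phi z - Phi z') (Phi z - Phi z') <= pg_factor mu Lg * dotv (z - z') (z - z').
Proof.
move=> Zz Zz'; set eta := mu / (2 * Lg ^+ 2).
have eta_gt0 : 0 < eta by rewrite divr_gt0 ?mulr_gt0 ?exprn_gt0.
apply: le_trans (proj_nonexpansive Z0 Zcompact Zconvex _ _) _.
have -> : z - eta *: G z - (z' - eta *: G z') = (z - z') - eta *: (G z - G z').
  by apply/rowP => i; rewrite !mxE; ring.
rewrite [dotv (_ - eta *: _) _]dotvvB !dotvZl !dotvZr (dotvC (z - z')).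
have h1 := G_strong Zz Zz'; have h2 := G_lip Zz Zz'.
set N := dotv (z - z') (z - z') in h1 h2 *.
have e1 : eta * (eta * dotv (G z - G z') (G z - G z')) <= eta * (eta * (Lg ^+ 2 * N)).
  by rewrite !ler_wpM2l // ltW.
have e2 : eta * (mu * N) <= eta * dotv (G z - G z') (z - z') by rewrite ler_wpM2l // ltW.
(* eta = mu / (2 Lg^2) minimizes 1 - 2 eta mu + eta^2 Lg^2, the minimum being pg_factor. *)
have -> : pg_factor mu Lg * N = N - 2 * (eta * (mu * N)) + eta * (eta * (Lg ^+ 2 * N)).
  by rewrite /pg_factor /eta; field; rewrite gt_eqF.
lra.
Qed.

Lemma pg_step_nonexpansive z z' : Z z -> Z z' -> enorm (Phi z - Phi z') <= enorm (z - z').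
Proof.
move=> Zz Zz'; rewrite ler_enorm; apply: le_trans (pg_step_contraction Zz Zz') _.
by rewrite ler_piMl ?dotvv_ge0 ?pg_factor_ge0 ?ltW ?pg_factor_lt1.
Qed.

Lemma pg_step_in z : Z (Phi z).
Proof. exact: proj_in. Qed.

Lemma pg_fixed_exists : exists2 zb, Z zb & Phi zb = zb.
Proof.
pose g z := enorm (z - Phi z).
have g_cont : {within Z, continuous g}.
  apply: (@lipschitz_within_continuous _ _ _ _ 2) => a b Za Zb.
  apply: le_trans (ler_enorm_dist _ _) _.
  have e : a - Phi a - (b - Phi b) = (a - b) + (Phi b - Phi a).
    by apply/rowP => i; rewrite !mxE; ring.
  rewrite e; apply: le_trans (ler_enormD _ _) _; rewrite (enorm_distC (Phi b)).
  by have := pg_step_nonexpansive Za Zb; lra.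
have [zm /[!in_setE] Zzm zm_min] := EVT_min_rV Z0 Zcompact g_cont.
exists zm => //; apply/eqP; rewrite eq_sym -subr_eq0; apply/eqP/dotvv_eq0.
have := zm_min _ (mem_set (pg_step_in zm)); rewrite /g ler_enorm => h.
have := le_trans h (pg_step_contraction Zzm (pg_step_in zm)).
set N := dotv (zm - Phi zm) (zm - Phi zm) => hN.
apply/eqP; rewrite eq_le dotvv_ge0 andbT.
have : (1 - pg_factor mu Lg) * N <= 0 by rewrite mulrBl mul1r subr_le0.
by rewrite pmulr_rle0 // subr_gt0 pg_factor_lt1.
Qed.

Lemma svi_iff_pg_fixed w : svi Z G w <-> Z w /\ Phi w = w.
Proof.
have eta_ge0 : 0 <= mu / (2 * Lg ^+ 2) by rewrite ltW ?divr_gt0 ?mulr_gt0 ?exprn_gt0.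
have step_dir : w - mu / (2 * Lg ^+ 2) *: G w - w = - (mu / (2 * Lg ^+ 2) *: G w).
  by apply/rowP => i; rewrite !mxE; ring.
split => [[Zw w_svi] | [Zw w_fix]].
  split => //; apply: (proj_eq Z0 Zcompact Zconvex) => // w' Zw'.
  by rewrite step_dir dotvNl dotvZl oppr_le0 mulr_ge0 ?w_svi.
split => // w' Zw'.
have := proj_obtuse Z0 Zcompact Zconvex (w - mu / (2 * Lg ^+ 2) *: G w) Zw'.
rewrite [Defs.proj _ _]w_fix step_dir dotvNl dotvZl oppr_le0 pmulr_rge0 //.
by rewrite divr_gt0 ?mulr_gt0 ?exprn_gt0.
Qed.

Lemma pg_iter_in t z : Z z -> Z (iter t Phi z).
Proof. by case: t => [|t] // _; apply: pg_step_in. Qed.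

Lemma pg_iter_sq_dist t z zb : Z z -> Z zb -> Phi zb = zb ->
  dotv (iter t Phi z - zb) (iter t Phi z - zb) <= pg_factor mu Lg ^+ t * dotv (z - zb) (z - zb).
Proof.
move=> Zz Zzb zb_fix; elim: t => [|t IH]; first by rewrite expr0 mul1r.
rewrite iterS -[in X in X <= _]zb_fix [pg_factor _ _ ^+ _]exprS -mulrA.
apply: le_trans (pg_step_contraction (pg_iter_in t Zz) Zzb) _.
by rewrite ler_wpM2l ?pg_factor_ge0.
Qed.

End ProjectedGradient.

Section Ceiling.
Variable R : realType.
Implicit Types x : R.

Lemma ceiln_ge x : 0 <= x -> x <= (ceiln x)%:R.
Proof.
move=> x0; rewrite /ceiln natr_absz ger0_norm ?ceil_ge //.
by rewrite ceil_ge0; lra.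
Qed.

Lemma ceiln_le x : 0 <= x -> (ceiln x)%:R <= x + 1.
Proof.
move=> x0; rewrite /ceiln natr_absz ger0_norm; last by rewrite ceil_ge0; lra.
by have := ceilB1_lt x; rewrite intrD /=; lra.
Qed.

(* (1 - x)^T <= exp (- x T), and x T >= 3 ln M with M = 8 Lg^2 (k + 1) / rho^2 >= 32 (k + 1). *)
Lemma pg_factor_pow_le (rho Lg : R) (k : nat) : 0 < rho -> 2 * rho <= Lg ->
  pg_factor rho Lg ^+ ceiln (1 + 4 * Lg ^+ 2 / rho ^+ 2 *
                               ln (8 * Lg ^+ 2 * k.+1%:R / rho ^+ 2))
  <= (32 * k.+1%:R)^-1.
Proof.
move=> rho_gt0 rho_le.
have r2 : 0 < rho ^+ 2 by rewrite exprn_gt0.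
have Lg2 : 4 * rho ^+ 2 <= Lg ^+ 2.
  by rewrite (_ : 4 * rho ^+ 2 = (2 * rho) ^+ 2) ?lerXn2r ?nnegrE //; [lra | lra | ring].
rewrite /pg_factor; set x := 3 * rho ^+ 2 / (4 * Lg ^+ 2).
have x_gt0 : 0 < x by rewrite divr_gt0 ?mulr_gt0 //; lra.
have x_le1 : x <= 1 by rewrite ler_pdivrMr ?mulr_gt0 // ?mul1r; lra.
set M := 8 * Lg ^+ 2 * k.+1%:R / rho ^+ 2.
have k1 : (1 : R) <= k.+1%:R by rewrite ler1n.
have M_ge : 32 * k.+1%:R <= M.
  have k8 : 0 <= 8 * k.+1%:R :> R by rewrite mulr_ge0 ?ler0n.
  by rewrite /M ler_pdivlMr //; have := ler_wpM2l k8 Lg2; lra.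
have lnM_ge0 : 0 <= ln M by apply: ln_ge0; nra.
set T := ceiln _.
have T_ge : 4 * Lg ^+ 2 / rho ^+ 2 * ln M <= T%:R.
  have c_ge0 : 0 <= 4 * Lg ^+ 2 / rho ^+ 2 :=
    divr_ge0 (mulr_ge0 (ler0n _ 4) (sqr_ge0 _)) (sqr_ge0 _).
  have arg_ge0 := mulr_ge0 c_ge0 lnM_ge0.
  by apply: le_trans (ceiln_ge _); lra.
apply: (@le_trans _ _ (expR (- x) ^+ T)).
  apply: lerXn2r; rewrite ?nnegrE ?expR_ge0 //; first lra.
  by have := expR_ge1Dx (- x); lra.
rewrite -expRM_natr; apply: (@le_trans _ _ (expR (- ln M))).
  rewrite ler_expR mulNr lerN2.
  have xT : x * (4 * Lg ^+ 2 / rho ^+ 2 * ln M) = 3 * ln M.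
    by rewrite /x; field; rewrite !gt_eqF //; nra.
  by have := ler_wpM2l (ltW x_gt0) T_ge; rewrite xT; lra.
have M_gt0 : 0 < M by lra.
have k32_gt0 : 0 < 32 * k.+1%:R :> R by rewrite mulr_gt0 ?ltr0n.
rewrite expRN lnK ?posrE //.
have -> : (M^-1 <= (32 * k.+1%:R)^-1) = (32 * k.+1%:R <= M) by apply: lef_pV2; rewrite posrE.
exact: M_ge.
Qed.

End Ceiling.

Section WeightedSums.
Variable R : realType.

Lemma weighted_telescope_le (th A : nat -> R) (D2 : R) (K : nat) :
  (forall k, 0 <= th k) -> (forall k, th k <= th k.+1) -> (forall k, 0 <= A k <= D2) ->
  \sum_(k < K.+1) th k * (A k - A k.+1) <= th K * D2.
Proof.
move=> th_ge0 th_incr A_bd.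
suff : \sum_(k < K.+1) th k * (A k - A k.+1) <= th K * (D2 - A K.+1).
  move/le_trans; apply; rewrite ler_wpM2l //.
  by case/andP: (A_bd K.+1); lra.
elim: K => [|K IH].
  by rewrite big_ord1 ler_wpM2l //; case/andP: (A_bd 0%N); lra.
rewrite big_ord_recr /=; apply: le_trans (lerD IH (lexx _)) _.
have : th K * (D2 - A K.+1) <= th K.+1 * (D2 - A K.+1).
  by rewrite ler_wpM2r // subr_ge0; case/andP: (A_bd K.+1).
move/lerD/(_ (lexx (th K.+1 * (A K.+1 - A K.+2)))) /le_trans; apply.
by rewrite -mulrDr ler_wpM2l //; lra.
Qed.

Lemma powRS_sub_le (al : R) (K : nat) : 0 <= al ->
  (K.+1%:R) `^ (al + 1) - (K%:R) `^ (al + 1) <= (al + 1) * (K.+1%:R) `^ al.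
Proof.
move=> al_ge0; case: K => [|K].
  by rewrite powR0 ?subr0 ?powR1 ?mulr1 ?gt_eqF; lra.
have K0 : (0 : R) < K.+1%:R by rewrite ltr0n.
have KK : (K.+1%:R : R) < K.+2%:R by rewrite ltr_nat.
have hd (x : R) : x \in `]K.+1%:R, K.+2%:R[ ->
    is_derive x 1 (fun y : R => y `^ (al + 1)) ((al + 1) * x `^ (al + 1 - 1)).
  by rewrite in_itv /= => /andP[x_gt _]; apply: is_derive1_powR (lt_trans K0 x_gt).
have hc : {within `[K.+1%:R, K.+2%:R], continuous (fun y : R => y `^ (al + 1))}.
  apply: derivable_within_continuous => x; rewrite in_itv /= => /andP[x_ge _].
  by apply: derivable_powR; rewrite in_itv /= andbT; apply: lt_le_trans K0 x_ge.
have [c /[!in_itv] /= /andP[c_gt c_lt] ->] := MVT KK hd hc.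
rewrite addrK -natrB // subSn // subnn mulr1 ler_wpM2l //; first lra.
by apply: ge0_ler_powR; rewrite ?nnegrE ?ler0n //; apply: ltW; [apply: lt_trans K0 c_gt|].
Qed.

Lemma sum_powR_ge (al : R) (K : nat) : 0 <= al ->
  (K%:R) `^ (al + 1) <= (al + 1) * \sum_(k < K) (k.+1%:R) `^ al.
Proof.
move=> al_ge0; elim: K => [|K IH]; first by rewrite big_ord0 mulr0 powR0 // gt_eqF //; lra.
by rewrite big_ord_recr /= mulrDr; have := powRS_sub_le K al_ge0; lra.
Qed.

Lemma sum_powR_div_le (al : R) (K : nat) : 1 <= al ->
  \sum_(k < K) (k.+1%:R) `^ al / k.+1%:R <= (K%:R) `^ al.
Proof.
move=> al_ge1.
have powR_split x : 0 <= x -> x `^ al = x * x `^ (al - 1).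
  by move=> x_ge0; rewrite mulr_powRB1 //; lra.
apply: (@le_trans _ _ (\sum_(k < K) (K%:R) `^ (al - 1))).
  apply: ler_sum => k _; rewrite powR_split ?ler0n // mulrAC mulfV ?pnatr_eq0 // mul1r.
  by apply: ge0_ler_powR; rewrite ?nnegrE ?ler0n ?ler_nat //; lra.
by rewrite sumr_const card_ord -[_ *+ K]mulr_natl -powR_split ?ler0n.
Qed.

Lemma weighted_stage_sum_le (K : nat) (th a A : nat -> R) (D2 : R) :
  (forall k, 0 <= th k) -> (forall k, th k <= th k.+1) -> (forall k, 0 <= A k <= D2) ->
  \sum_(k < K.+1) th k / k.+1%:R <= th K ->
  (forall k, 23 * a k <= 32 * (A k - A k.+1) + 4 * (D2 / k.+1%:R)) ->
  23 * \sum_(k < K.+1) th k * a k <= 36 * (th K * D2).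
Proof.
move=> th_ge0 th_incr A_bd div_le stage.
have D2_ge0 : 0 <= D2 by case/andP: (A_bd 0%N); apply: le_trans.
have comb : 23 * \sum_(k < K.+1) th k * a k <=
    32 * \sum_(k < K.+1) th k * (A k - A k.+1) + 4 * D2 * \sum_(k < K.+1) th k / k.+1%:R.
  rewrite !mulr_sumr -big_split /=; apply: ler_sum => k _.
  rewrite (_ : 32 * _ + _ = th k * (32 * (A k - A k.+1) + 4 * (D2 / k.+1%:R))).
    by rewrite mulrCA ler_wpM2l.
  by ring.
have := weighted_telescope_le K th_ge0 th_incr A_bd.
have := ler_wpM2l (mulr_ge0 (ler0n _ 4) D2_ge0) div_le; lra.
Qed.

Lemma weighted_average_le (K : nat) (a A : nat -> R) (D2 al eps rho : R) :
  1 <= al -> 0 < rho -> 0 < eps -> (forall k, 0 <= A k <= D2) ->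
  (forall k, 23 * a k <= 32 * (A k - A k.+1) + 4 * (D2 / k.+1%:R)) ->
  16 * rho ^+ 2 * D2 * (al + 1) / eps ^+ 2 <= K%:R ->
  \sum_(k < K) ((k.+1%:R) `^ al / \sum_(l < K) (l.+1%:R) `^ al) * a k
    <= (2 * rho)^-1 ^+ 2 * eps ^+ 2.
Proof.
move=> al_ge1 rho_gt0 eps_gt0 A_bd stage K_ge.
have D2_ge0 : 0 <= D2 by case/andP: (A_bd 0%N); apply: le_trans.
have r2 : 0 < rho ^+ 2 by rewrite exprn_gt0.
have e2 : 0 < eps ^+ 2 by rewrite exprn_gt0.
set th := fun k : nat => (k.+1%:R : R) `^ al.
have th_ge0 k : 0 <= th k by apply: powR_ge0.
have th_incr k : th k <= th k.+1.
  by apply: ge0_ler_powR; rewrite ?nnegrE ?ler0n ?ler_nat //; lra.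
case: K K_ge => [|K] K_ge; first by rewrite big_ord0 mulr_ge0 ?sqr_ge0.
set W := \sum_(l < K.+1) th l.
have W_gt0 : 0 < W.
  rewrite /W big_ord_recl /=; apply: lt_le_trans (_ : 0 < th 0%N) _.
    by rewrite powR_gt0.
  by rewrite lerDl sumr_ge0.
have -> : \sum_(k < K.+1) th k / W * a k = (\sum_(k < K.+1) th k * a k) / W.
  by rewrite mulr_suml; apply: eq_bigr => k _; rewrite mulrAC.
have S_le := weighted_stage_sum_le th_ge0 th_incr A_bd (sum_powR_div_le K.+1 al_ge1) stage.
have W_ge : K.+1%:R * th K <= (al + 1) * W.
  apply: le_trans (sum_powR_ge K.+1 (_ : 0 <= al)) => //; last lra.
  rewrite powRD ?powRr1 ?ler0n 1?mulrC //; apply/implyP => _; exact: lt0r_neq0.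
have PD : 16 * rho ^+ 2 * (th K * D2) <= eps ^+ 2 * W.
  have c_ge0 : 0 <= 16 * rho ^+ 2 * D2 by nra.
  have K_ge' : 16 * rho ^+ 2 * D2 * (al + 1) <= K.+1%:R * eps ^+ 2.
    by rewrite -ler_pdivrMr.
  rewrite -(ler_pM2l (ltr0Sn _ K)).
  have -> : K.+1%:R * (16 * rho ^+ 2 * (th K * D2)) = 16 * rho ^+ 2 * D2 * (K.+1%:R * th K).
    by ring.
  apply: le_trans (ler_wpM2l c_ge0 W_ge) _.
  by rewrite mulrA [X in _ <= X]mulrA ler_pM2r.
rewrite ler_pdivrMr // (_ : _ * W = eps ^+ 2 * W / (4 * rho ^+ 2)); last first.
  by field; rewrite gt_eqF.
rewrite ler_pdivlMr ?mulr_gt0 //; nra.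
Qed.

Lemma sum_weighted_ereal_le (K : nat) (w a : 'I_K -> R) (d : 'I_K -> \bar R) (c b : R) :
  (forall k, 0 <= w k) -> 0 <= c -> (forall k, (d k <= (c * a k)%:E)%E) ->
  \sum_(k < K) w k * a k <= b -> (\sum_(k < K) (w k)%:E * d k <= (c * b)%:E)%E.
Proof.
move=> w_ge0 c_ge0 d_le sum_le.
apply: (@le_trans _ _ (\sum_(k < K) ((w k)%:E * (c * a k)%:E))%E).
  by apply: lee_sum => k _; apply: lee_wpmul2l => //; rewrite lee_fin.
rewrite (_ : (\sum_(k < K) (w k)%:E * (c * a k)%:E)%E = (\sum_(k < K) c * (w k * a k))%:E).
  by rewrite lee_fin -mulr_sumr ler_wpM2l.
by rewrite -sumEFin; apply: eq_bigr => k _; rewrite -EFinM; congr (_%:E); ring.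
Qed.

End WeightedSums.

Section StageLengths.
Variables (R : realType) (T : nat -> nat) (c0 a b : R).
Hypotheses (a_ge0 : 0 <= a) (b_gt0 : 0 < b).
Hypothesis T_le : forall k, (T k)%:R <= c0 + a * ln (b * k.+1%:R).

Lemma sum_stage_lengths_le N :
  (\sum_(k < N) T k)%:R <= N%:R * (c0 + a * ln (b * N%:R)).
Proof.
rewrite natr_sum; apply: (@le_trans _ _ (\sum_(k < N) (c0 + a * ln (b * N%:R)))).
  apply: ler_sum => k _; apply: le_trans (T_le k) _.
  have N_gt0 : (0 < N)%N by apply: leq_ltn_trans (ltn_ord k).
  rewrite lerD2l ler_wpM2l // ler_ln ?ler_pM2l ?ler_nat //.
    by rewrite posrE mulr_gt0.
  by rewrite posrE mulr_gt0 ?ltr0n.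
by rewrite sumr_const card_ord mulr_natl.
Qed.

Lemma stage_lengths_le_log (c eps : R) : 0 <= c -> 0 < eps ->
  1 + `|ln (b * (c + 1))| <= ln eps^-1 ->
  (\sum_(k < ceiln (c / eps ^+ 2)) T k)%:R <=
    (c + 1) * (`|c0| + 3 * a) * (ln eps^-1 / eps ^+ 2).
Proof.
move=> c_ge0 eps_gt0; set u := ln eps^-1 => u_ge; have a0 := a_ge0.
have u_ge1 : 1 <= u by have := normr_ge0 (ln (b * (c + 1))); lra.
have ieps_gt0 : 0 < eps^-1 by rewrite invr_gt0.
have ieps_ge1 : 1 <= eps^-1.
  by rewrite -(lnK (ieps_gt0 : _ \in Num.pos)) -expR0 ler_expR -/u; lra.
have ieps2_ge1 : 1 <= eps^-1 ^+ 2 by rewrite expr_ge1 ?(le_trans ler01).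
have c0_ge0 : 0 <= `|c0| := normr_ge0 c0.
have Y_ge0 : 0 <= (`|c0| + 3 * a) * u by nra.
set N := ceiln _.
have N_le : N%:R <= (c + 1) * eps^-1 ^+ 2.
  apply: le_trans (ceiln_le _) _; first by rewrite divr_ge0 ?sqr_ge0.
  by rewrite -exprVn mulrDl mul1r lerD2l.
rewrite (_ : _ * _ * _ = (c + 1) * eps^-1 ^+ 2 * ((`|c0| + 3 * a) * u)); last first.
  by rewrite exprVn; ring.
have [->|N_gt0] := posnP N; first by rewrite big_ord0 mulr_ge0 ?mulr_ge0 ?sqr_ge0 //; lra.
apply: le_trans (sum_stage_lengths_le N) _.
apply: (@le_trans _ _ (N%:R * ((`|c0| + 3 * a) * u))); last by rewrite ler_wpM2r.
rewrite ler_wpM2l //.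
have lnN : ln (b * N%:R) <= 3 * u.
  have bc_gt0 : 0 < b * (c + 1) by rewrite mulr_gt0 //; lra.
  have bN_gt0 : 0 < b * N%:R by rewrite mulr_gt0 ?ltr0n.
  have ieps2_gt0 : 0 < eps^-1 ^+ 2 by rewrite exprn_gt0.
  have M_gt0 : 0 < b * (c + 1) * eps^-1 ^+ 2 by rewrite mulr_gt0.
  have : ln (b * N%:R) <= ln (b * (c + 1)) + ln (eps^-1 ^+ 2).
    rewrite -(lnM (bc_gt0 : _ \in Num.pos) (ieps2_gt0 : _ \in Num.pos)).
    rewrite (ler_ln (bN_gt0 : _ \in Num.pos) (M_gt0 : _ \in Num.pos)).
    by rewrite -mulrA ler_pM2l.
  by rewrite lnXn // -/u; have := ler_norm (ln (b * (c + 1))); lra.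
have c0_le : c0 <= `|c0| := ler_norm c0.
have := ler_wpM2l a0 lnN; nra.
Qed.

Lemma stage_lengths_bigO (c M : R) : 0 <= c -> 0 < M ->
  (fun eps : R => (\sum_(k < ceiln (c / eps ^+ 2)) T k)%:R : R)
    =O_ (at_right (0:R)) (fun eps : R => ln (eps^-1) * M / eps ^+ 2).
Proof.
move=> c_ge0 M_gt0; set m := 1 + `|ln (b * (c + 1))|; have a0 := a_ge0.
have c0_ge0 : 0 <= `|c0| := normr_ge0 c0.
have Y_gt0 : 0 < `|c0| + 3 * a + 1 by lra.
apply/eqO_exP; exists ((c + 1) * (`|c0| + 3 * a + 1) / M).
  by rewrite divr_gt0 // mulr_gt0 //; lra.
near=> eps.
have eps_gt0 : 0 < eps by near: eps; exact: nbhs_right_gt.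
have eps_le : eps <= expR (- m) by near: eps; apply: nbhs_right_le; exact: expR_gt0.
have u_ge : m <= ln eps^-1.
  rewrite lnV ?posrE // lerNr -[- m]expRK ler_ln ?posrE ?expR_gt0 //.
have u_ge0 : 0 <= ln eps^-1 by apply: le_trans u_ge; rewrite addr_ge0.
rewrite normr_nat [`|ln _ * _ / _|]ger0_norm; last first.
  by apply: divr_ge0; [apply: mulr_ge0 => //; apply: ltW | apply: sqr_ge0].
apply: le_trans (stage_lengths_le_log c_ge0 eps_gt0 u_ge) _.
rewrite (_ : _ / M * _ = (c + 1) * (`|c0| + 3 * a + 1) * (ln eps^-1 / eps ^+ 2)).
  apply: ler_wpM2r; first by apply: divr_ge0 => //; apply: sqr_ge0.
  by apply: ler_wpM2l; lra.
by field; rewrite !gt_eqF.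
Unshelve. all: by end_near.
Qed.

End StageLengths.

Section Stationarity.
Variable R : realType.

Lemma fsub_sub_normal m (S : set 'rV[R]_m) (h : 'rV[R]_m -> R) u g0 g :
  S u -> fsub setT h u g0 -> (forall x, S x -> 0 <= dotv g (x - u)) ->
  fsub S h u (g0 - g).
Proof.
move=> Su [_ g0_sub] g_normal; split => // e e_gt0.
have [d d_gt0 hd] := g0_sub e e_gt0; exists d => // x Sx x_near.
have := hd x I x_near; have := g_normal x Sx; rewrite dotvBl; lra.
Qed.

Variables (p q : nat) (X : set 'rV[R]_p) (Y : set 'rV[R]_q).
Local Notation Z := [set z : 'rV[R]_(p + q) | X (lsubmx z) /\ Y (rsubmx z)].

Lemma convex_set_prod : convex_set X -> convex_set Y -> convex_set Z.
Proof.
move=> cX cY x y t /[!in_setE] -[Xx Yx] [Xy Yy].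
have /andP[t_ge0 t_le1] : 0 <= t%:num <= 1 by rewrite ge0 le1.
change (X (lsubmx (t%:num *: x + (1 - t%:num) *: y)) /\
        Y (rsubmx (t%:num *: x + (1 - t%:num) *: y))).
rewrite (_ : lsubmx _ = t%:num *: lsubmx x + (1 - t%:num) *: lsubmx y); last first.
  by apply/rowP => i; rewrite !mxE.
rewrite (_ : rsubmx _ = t%:num *: rsubmx x + (1 - t%:num) *: rsubmx y); last first.
  by apply/rowP => i; rewrite !mxE.
by split; apply: convex_set_comb.
Qed.

Lemma dotv_lrsub (u v : 'rV[R]_(p + q)) :
  dotv u v = dotv (lsubmx u) (lsubmx v) + dotv (rsubmx u) (rsubmx v).
Proof. by rewrite /dotv big_split_ord; congr (_ + _); apply: eq_bigr => i _; rewrite !mxE. Qed.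

Lemma normal_prod_lsub (zb g : 'rV[R]_(p + q)) :
  (forall z, Z z -> 0 <= dotv g (z - zb)) -> Y (rsubmx zb) ->
  forall x, X x -> 0 <= dotv (lsubmx g) (x - lsubmx zb).
Proof.
move=> g_normal Yzb x Xx.
have := g_normal (row_mx x (rsubmx zb)); rewrite /= row_mxKl row_mxKr => /(_ (conj Xx Yzb)).
by rewrite dotv_lrsub !raddfB /= row_mxKl row_mxKr subrr dotv0r addr0.
Qed.

Lemma normal_prod_rsub (zb g : 'rV[R]_(p + q)) :
  (forall z, Z z -> 0 <= dotv g (z - zb)) -> X (lsubmx zb) ->
  forall y, Y y -> 0 <= dotv (rsubmx g) (y - rsubmx zb).
Proof.
move=> g_normal Xzb y Yy.
have := g_normal (row_mx (lsubmx zb) y); rewrite /= row_mxKl row_mxKr => /(_ (conj Xzb Yy)).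
by rewrite dotv_lrsub !raddfB /= row_mxKl row_mxKr subrr dotv0r add0r.
Qed.

(* By the SVI, F zb - (F zb + c (zb - w)) = c (w - zb) is a normal vector of Z at zb. *)
Lemma svi_prox_dist2_subdiff_le (f : 'rV[R]_p -> 'rV[R]_q -> R)
    (F : 'rV[R]_(p + q) -> 'rV[R]_(p + q)) (c : R) (w zb : 'rV[R]_(p + q)) :
  fsub setT (fun x => f x (rsubmx zb)) (lsubmx zb) (lsubmx (F zb)) ->
  fsub setT (fun y => - f (lsubmx zb) y) (rsubmx zb) (rsubmx (F zb)) ->
  svi Z (fun z => F z + c *: (z - w)) zb ->
  (dist2_0 [set zeta : 'rV[R]_(p + q) |
     fsub X (fun x => f x (rsubmx zb)) (lsubmx zb) (lsubmx zeta) /\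
     fsub Y (fun y => - f (lsubmx zb) y)%R (rsubmx zb) (rsubmx zeta)]
   <= (c ^+ 2 * enorm (w - zb) ^+ 2)%:E)%E.
Proof.
move=> Fx Fy [[Xzb Yzb] zb_svi].
set g := F zb + c *: (zb - w).
apply: ereal_inf_lbound; exists (F zb - g).
  split; rewrite raddfB; apply: fsub_sub_normal => //.
    exact: normal_prod_lsub zb_svi Yzb.
  exact: normal_prod_rsub zb_svi Xzb.
congr (_%:E); rewrite (_ : F zb - g = c *: (w - zb)); last first.
  by rewrite /g; apply/rowP => i; rewrite !mxE; ring.
by rewrite enormZ exprMn real_normK ?num_real.
Qed.

Lemma sum_dist2_subdiff_le (f : 'rV[R]_p -> 'rV[R]_q -> R)
    (F : 'rV[R]_(p + q) -> 'rV[R]_(p + q)) (c b : R) (K : nat) (w : 'I_K -> R)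
    (zk zbar : nat -> 'rV[R]_(p + q)) :
  (forall k, 0 <= w k) ->
  (forall k, fsub setT (fun x => f x (rsubmx (zbar k))) (lsubmx (zbar k)) (lsubmx (F (zbar k))) /\
     fsub setT (fun y => - f (lsubmx (zbar k)) y) (rsubmx (zbar k)) (rsubmx (F (zbar k)))) ->
  (forall k, svi Z (fun z => F z + c *: (z - zk k)) (zbar k)) ->
  \sum_(k < K) w k * enorm (zk k - zbar k) ^+ 2 <= b ->
  (\sum_(k < K) (w k)%:E * dist2_0 [set zeta : 'rV[R]_(p + q) |
     fsub X (fun x => f x (rsubmx (zbar k))) (lsubmx (zbar k)) (lsubmx zeta) /\
     fsub Y (fun y => - f (lsubmx (zbar k)) y)%R (rsubmx (zbar k)) (rsubmx zeta)]
   <= (c ^+ 2 * b)%:E)%E.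
Proof.
move=> w_ge0 F_sub zbar_svi sum_le.
apply: (sum_weighted_ereal_le w_ge0 (sqr_ge0 c) _ sum_le) => k.
by case: (F_sub k) => Fx Fy; apply: svi_prox_dist2_subdiff_le Fx Fy (zbar_svi k).
Qed.

End Stationarity.

Section InexactProximalPoint.
Variables (R : realType) (n : nat) (Z : set 'rV[R]_n) (F : 'rV[R]_n -> 'rV[R]_n).
Variables (rho L D : R) (z0 zs : 'rV[R]_n).
Hypotheses (Zcompact : compact Z) (Zconvex : convex_set Z) (Zz0 : Z z0) (Zzs : Z zs).
Hypotheses (rho_gt0 : 0 < rho) (L_ge0 : 0 <= L).
Hypothesis F_weak : forall z z', Z z -> Z z' ->
  - rho * enorm (z - z') ^+ 2 <= dotv (F z - F z') (z - z').
Hypothesis F_lip : forall z z', Z z -> Z z' -> enorm (F z - F z') <= L * enorm (z - z').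
Hypothesis zs_mvi : forall z, Z z -> 0 <= dotv (F z) (z - zs).
Hypothesis Z_diam : forall z z', Z z -> Z z' -> enorm (z - z') <= D.

Local Notation gamma := ((2 * rho)^-1).
Local Notation Lg := (L + 2 * rho).
Local Notation stage_length k :=
  (ceiln (1 + 4 * Lg ^+ 2 / rho ^+ 2 * ln (8 * Lg ^+ 2 * k.+1%:R / rho ^+ 2))).
Local Notation zk := (ipp Z F gamma (fun _ => rho / (2 * Lg ^+ 2)) (fun k => stage_length k) z0).
Local Notation prox w := (fun z => F z + gamma^-1 *: (z - w)).

Let Z0 : Z !=set0. Proof. by exists z0. Qed.
Let Lg_ge : 2 * rho <= Lg. Proof. by have := L_ge0; lra. Qed.
Let rho_le_Lg : rho <= Lg. Proof. by have := rho_gt0; have := Lg_ge; lra. Qed.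
Let Lg_ge0 : 0 <= Lg. Proof. by have := rho_gt0; have := Lg_ge; lra. Qed.
Let gammaV : gamma^-1 = 2 * rho. Proof. exact: invrK. Qed.

Let prox_diff w z z' : prox w z - prox w z' = (F z - F z') + (2 * rho) *: (z - z').
Proof. by rewrite gammaV; apply/rowP => i; rewrite !mxE; ring. Qed.

Lemma prox_strongly_monotone w z z' : Z z -> Z z' ->
  rho * dotv (z - z') (z - z') <= dotv (prox w z - prox w z') (z - z').
Proof.
move=> Zz Zz'; rewrite prox_diff (dotvDl (F z - F z')) dotvZl.
by have := F_weak Zz Zz'; rewrite sqr_enorm; lra.
Qed.

Lemma prox_lipschitz w z z' : Z z -> Z z' ->
  dotv (prox w z - prox w z') (prox w z - prox w z') <= Lg ^+ 2 * dotv (z - z') (z - z').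
Proof.
move=> Zz Zz'; rewrite prox_diff -!sqr_enorm -exprMn.
rewrite lerXn2r ?nnegrE ?mulr_ge0 ?enorm_ge0 ?Lg_ge0 //.
apply: le_trans (ler_enormD _ _) _.
rewrite enormZ ger0_norm; last exact: ltW (mulr_gt0 (ltr0n _ 2) rho_gt0).
by rewrite (mulrDl L) lerD2r F_lip.
Qed.

Lemma ipp_in k : Z (zk k).
Proof. by elim: k => [|k IH] //=; apply: (pg_iter_in _ _ _ Z0 Zcompact). Qed.

Lemma ipp_svi_exists w : exists zb, svi Z (prox w) zb.
Proof.
have [zb Zzb zb_fix] := pg_fixed_exists Z0 Zcompact Zconvex rho_gt0 rho_le_Lg
  (@prox_strongly_monotone w) (@prox_lipschitz w).
by exists zb; apply/(svi_iff_pg_fixed (prox w) Z0 Zcompact Zconvex rho_gt0 rho_le_Lg).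
Qed.

Lemma svi_prox_mvi_obtuse w zb : svi Z (prox w) zb -> 0 <= dotv (zb - w) (zs - zb).
Proof.
move=> [Zzb zb_svi]; have svi_zs := zb_svi _ Zzs; have mvi := zs_mvi Zzb.
rewrite /= (dotvDl (F zb)) dotvZl gammaV in svi_zs.
rewrite -opprB dotvNr in mvi.
have : 0 <= 2 * rho * dotv (zb - w) (zs - zb) by lra.
by rewrite (pmulr_rge0 _ (mulr_gt0 (ltr0n _ 2) rho_gt0)).
Qed.

Lemma ipp_inner_error k zb : svi Z (prox (zk k)) zb ->
  dotv (zk k.+1 - zb) (zk k.+1 - zb) <= (32 * k.+1%:R)^-1 * dotv (zk k - zb) (zk k - zb).
Proof.
move=> zb_svi; have [Zzb zb_fix] :=
  (svi_iff_pg_fixed (prox (zk k)) Z0 Zcompact Zconvex rho_gt0 rho_le_Lg zb).1 zb_svi.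
apply: le_trans (pg_iter_sq_dist Z0 Zcompact Zconvex rho_gt0 rho_le_Lg
  (@prox_strongly_monotone (zk k)) (@prox_lipschitz (zk k)) _ (ipp_in k) Zzb zb_fix) _.
by rewrite ler_wpM2r ?dotvv_ge0 ?pg_factor_pow_le.
Qed.

Let sq_diam z z' : Z z -> Z z' -> dotv (z - z') (z - z') <= D ^+ 2.
Proof.
move=> Zz Zz'; rewrite -sqr_enorm lerXn2r ?nnegrE ?enorm_ge0 ?Z_diam //.
exact: le_trans (enorm_ge0 _) (Z_diam Zz Zz').
Qed.

Lemma ipp_stage_le k zb : svi Z (prox (zk k)) zb ->
  23 * dotv (zk k - zb) (zk k - zb) <=
    32 * (dotv (zk k - zs) (zk k - zs) - dotv (zk k.+1 - zs) (zk k.+1 - zs)) +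
    4 * (D ^+ 2 / k.+1%:R).
Proof.
move=> zb_svi; apply: inexact_step_descent.
- exact: svi_prox_mvi_obtuse.
- exact: ipp_inner_error.
- exact: sq_diam zb_svi.1 Zzs.
- by rewrite ler1n.
Qed.

Lemma ipp_weighted_sq_dist_le (alpha eps : R) (K : nat) (zbar : nat -> 'rV[R]_n) :
  1 <= alpha -> 0 < eps -> 16 * rho ^+ 2 * D ^+ 2 * (alpha + 1) / eps ^+ 2 <= K%:R ->
  (forall k, svi Z (prox (zk k)) (zbar k)) ->
  \sum_(k < K) ((k.+1%:R) `^ alpha / \sum_(l < K) (l.+1%:R) `^ alpha) *
     enorm (zk k - zbar k) ^+ 2 <= gamma ^+ 2 * eps ^+ 2.
Proof.
move=> alpha_ge1 eps_gt0 K_ge zbar_svi.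
under eq_bigr do rewrite sqr_enorm.
apply: (weighted_average_le (a := fun k => dotv (zk k - zbar k) (zk k - zbar k))
  (A := fun k => dotv (zk k - zs) (zk k - zs)) (D2 := D ^+ 2)) => //.
- by move=> k /=; rewrite dotvv_ge0 sq_diam //; apply: ipp_in.
- by move=> k; apply: ipp_stage_le.
Qed.

Lemma ipp_stage_length_le k :
  (stage_length k)%:R <= 2 + 4 * Lg ^+ 2 / rho ^+ 2 * ln (8 * Lg ^+ 2 / rho ^+ 2 * k.+1%:R).
Proof.
have b_ge1 : 1 <= 8 * Lg ^+ 2 / rho ^+ 2.
  rewrite ler_pdivlMr ?exprn_gt0 // mul1r.
  have : rho ^+ 2 <= Lg ^+ 2 by rewrite lerXn2r ?nnegrE ?Lg_ge0 ?rho_le_Lg ?(ltW rho_gt0).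
  have := sqr_ge0 rho; lra.
have lnM_ge0 : 0 <= ln (8 * Lg ^+ 2 / rho ^+ 2 * k.+1%:R).
  by apply: ln_ge0; rewrite mulr_ege1 // ler1n.
have c_ge0 : 0 <= 4 * Lg ^+ 2 / rho ^+ 2 :=
  divr_ge0 (mulr_ge0 (ler0n _ 4) (sqr_ge0 _)) (sqr_ge0 _).
rewrite [8 * _ * _ / _]mulrAC.
by apply: le_trans (ceiln_le _) _; have := mulr_ge0 c_ge0 lnM_ge0; lra.
Qed.

Lemma ipp_stage_lengths_bigO (alpha : R) : 0 < L -> 0 <= alpha + 1 ->
  (fun eps : R =>
     (\sum_(k < ceiln (16 * rho ^+ 2 * D ^+ 2 * (alpha + 1) / eps ^+ 2)) stage_length k)%:R : R)
    =O_ (at_right (0:R)) (fun eps : R => ln (eps^-1) * L ^+ 2 / eps ^+ 2).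
Proof.
move=> L_gt0 alpha1_ge0.
have Lg_gt0 : 0 < Lg := lt_le_trans rho_gt0 rho_le_Lg.
apply: (stage_lengths_bigO _ _ ipp_stage_length_le _ (exprn_gt0 2 L_gt0)).
- exact: divr_ge0 (mulr_ge0 (ler0n _ 4) (sqr_ge0 _)) (sqr_ge0 _).
- exact: divr_gt0 (mulr_gt0 (ltr0n _ 8) (exprn_gt0 2 Lg_gt0)) (exprn_gt0 2 rho_gt0).
- apply: mulr_ge0 => //.
  by rewrite mulr_ge0 ?sqr_ge0 // mulr_ge0 ?sqr_ge0.
Qed.

End InexactProximalPoint.

Unset Implicit Arguments.

Theorem corollary12 (R : realType) (p q : nat)
  (X : set 'rV[R]_p) (Y : set 'rV[R]_q) (D : R)
  (f : 'rV[R]_p -> 'rV[R]_q -> R) (F : 'rV[R]_(p + q) -> 'rV[R]_(p + q))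
  (rho L alpha : R) (z0 : 'rV[R]_(p + q)) :
  let Z := [set z : 'rV[R]_(p + q) | X (lsubmx z) /\ Y (rsubmx z)] in
  closed X -> convex_set X -> closed Y -> convex_set Y -> compact Z ->
  (forall z z', Z z -> Z z' -> enorm (z - z') <= D) ->
  {within Z, continuous (fun z : 'rV[R]_(p + q) => f (lsubmx z) (rsubmx z))} ->
  (* F = d_x f x d_y(-f), single-valued on Z *)
  (forall z, Z z -> forall zeta : 'rV[R]_(p + q),
     (fsub setT (fun x => f x (rsubmx z)) (lsubmx z) (lsubmx zeta) /\
      fsub setT (fun y => - f (lsubmx z) y) (rsubmx z) (rsubmx zeta))
     <-> zeta = F z) ->
  0 < rho ->
  (forall z z', Z z -> Z z' ->
     - rho * enorm (z - z') ^+ 2 <= dotv (F z - F z') (z - z')) ->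
  0 < L ->
  (forall z z', Z z -> Z z' -> enorm (F z - F z') <= L * enorm (z - z')) ->
  (exists2 zs, Z zs & forall z, Z z -> 0 <= dotv (F z) (z - zs)) ->
  1 <= alpha ->
  Z z0 ->
  let gamma := (2 * rho)^-1 in
  let theta := fun k : nat => (k.+1%:R) `^ alpha in
  let eta := fun k : nat => rho / (2 * (L + 2 * rho) ^+ 2) in
  let T := fun k : nat => ceiln (1 + 4 * (L + 2 * rho) ^+ 2 / rho ^+ 2 *
                 ln (8 * (L + 2 * rho) ^+ 2 * k.+1%:R / rho ^+ 2)) in
  let zk := ipp Z F gamma eta T z0 in
  let Fg := fun (w z : 'rV[R]_(p + q)) => F z + gamma^-1 *: (z - w) in
  let K := fun eps : R => ceiln (16 * rho ^+ 2 * D ^+ 2 * (alpha + 1) / eps ^+ 2) in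
  let prob := fun (eps : R) (k : nat) =>
                theta k / \sum_(l < K eps) theta l in
  [/\ (forall k, exists w, svi Z (Fg (zk k)) w),
      (forall zbar : nat -> 'rV[R]_(p + q),
         (forall k, svi Z (Fg (zk k)) (zbar k)) ->
         forall eps : R, 0 < eps ->
           \sum_(k < K eps) prob eps k * enorm (zk k - zbar k) ^+ 2
             <= gamma ^+ 2 * eps ^+ 2
           /\
           (\sum_(k < K eps) (prob eps k)%R%:E *
              dist2_0 [set zeta : 'rV[R]_(p + q) |
                 fsub X (fun x => f x (rsubmx (zbar k))) (lsubmx (zbar k))
                        (lsubmx zeta) /\
                 fsub Y (fun y => - f (lsubmx (zbar k)) y)%R (rsubmx (zbar k))
                        (rsubmx zeta)] <= (eps ^+ 2)%R%:E)%E)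
    & (fun eps : R => (\sum_(k < K eps) T k)%:R : R)
        =O_ (at_right (0:R)) (fun eps : R => ln (eps^-1) * L ^+ 2 / eps ^+ 2)].
Proof.
move=> Z _ cvX _ cvY cZ diam _ F_subdiff rho_gt0 F_weak L_gt0 F_lip [zs Zzs zs_mvi].
move=> alpha_ge1 Zz0 gamma theta eta T zk Fg K prob.
have cvZ : convex_set Z := convex_set_prod cvX cvY.
have L_ge0 := ltW L_gt0.
have alpha1_ge0 : 0 <= alpha + 1 by lra.
split.
- by move=> k; apply: (ipp_svi_exists cZ cvZ Zz0 rho_gt0 L_ge0 F_weak F_lip).
- move=> zbar zbar_svi eps eps_gt0.
  have K_ge : 16 * rho ^+ 2 * D ^+ 2 * (alpha + 1) / eps ^+ 2 <= (K eps)%:R.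
    apply/ceiln_ge/divr_ge0/sqr_ge0; apply: mulr_ge0 => //.
    by rewrite mulr_ge0 ?sqr_ge0 // mulr_ge0 ?sqr_ge0.
  have avg : \sum_(k < K eps) prob eps k * enorm (zk k - zbar k) ^+ 2 <= gamma ^+ 2 * eps ^+ 2 :=
    ipp_weighted_sq_dist_le cZ cvZ Zz0 Zzs rho_gt0 L_ge0 F_weak F_lip zs_mvi diam
      alpha_ge1 eps_gt0 K_ge zbar_svi.
  have gamma_gt0 : 0 < gamma by rewrite /gamma invr_gt0; apply: mulr_gt0 => //; lra.
  split => //; rewrite [in X in (_ <= X)%E](_ : eps ^+ 2 = gamma^-1 ^+ 2 * (gamma ^+ 2 * eps ^+ 2)).
    apply: (sum_dist2_subdiff_le _ _ zbar_svi avg) => k.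
      by apply: divr_ge0; [|apply: sumr_ge0 => l _]; apply: powR_ge0.
    exact: (F_subdiff _ (zbar_svi k).1 (F (zbar k))).2 erefl.
  by rewrite mulrA -exprMn mulVf ?expr1n ?mul1r // gt_eqF.
- exact: (ipp_stage_lengths_bigO _ rho_gt0 L_ge0 L_gt0 alpha1_ge0).
Qed.
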